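(* Let $K$ be a flag simplicial complex on $[m]$ that is a starshaped $(n-1)$-sphere, let $\Lambda=(\lambda_{ij})$ ($1\leqslant i\leqslant n$, $1\leqslant j\leqslant m$) be a characteristic matrix for $K$, and let $\mathcal J\subset\mathbb Z[x_1,\dots,x_m]$ be the ideal generated by the linear forms $\lambda_{i1}x_1+\cdots+\lambda_{im}x_m$, $1\leqslant i\leqslant n$. If $\mathcal J$ contains a nonzero linear form $a_ix_i+a_jx_j$ with $i\neq j$ and $a_i,a_j\in\mathbb Z$, then $K$ is a suspension.
   Context: A simplicial complex $K$ on $[m]$ is flag if every missing face (non-face all of whose proper subsets are faces) has two elements. A starshaped $(n-1)$-sphere is a triangulated sphere isomorphic to the underlying complex of a complete simplicial fan in $\mathbb R^n$. A characteristic matrix is an $n\times m$ integer matrix with columns $\boldsymbol\lambda_1,\dots,\boldsymbol\lambda_m$ such that for each face $\{i_1,\dots,i_k\}\in K$ the vectors $\boldsymbol\lambda_{i_1},\dots,\boldsymbol\lambda_{i_k}$ are part of a basis of $\mathbb Z^n$. $K$ is a suspension if $K=K_{\{a,b\}}*L$ with $\{a,b\}\notin K$ (join). (For the topological toric manifold $M(P_K,\Lambda)$ one has $H^*(M;\mathbb Z)=\mathbb Z[K]/\mathcal J$.) *)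

From HB Require Import structures.
From mathcomp Require Import all_boot all_order all_algebra.
From mathcomp Require Import reals.
From mathcomp Require Import mpoly.
Set Implicit Arguments. Unset Strict Implicit. Unset Printing Implicit Defensive.
Import Order.TTheory GRing.Theory Num.Theory.
Local Open Scope ring_scope.

Definition simplicial_complex (m : nat) (K : {set {set 'I_m}}) : Prop :=
  set0 \in K /\ forall s t : {set 'I_m}, s \in K -> t \subset s -> t \in K.

Definition missing_face (m : nat) (K : {set {set 'I_m}}) (s : {set 'I_m}) : Prop :=
  s \notin K /\ forall t : {set 'I_m}, t \proper s -> t \in K.

Definition flag (m : nat) (K : {set {set 'I_m}}) : Prop :=
  forall s, missing_face K s -> #|s| = 2%N.

Definition in_cone (R : realType) (n m : nat) (v : 'I_m -> 'rV[R]_n)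
    (s : {set 'I_m}) (x : 'rV[R]_n) : Prop :=
  exists c : 'I_m -> R,
    (forall j, j \in s -> 0 <= c j) /\ x = \sum_(j in s) c j *: v j.

Definition lin_indep_on (R : realType) (n m : nat) (v : 'I_m -> 'rV[R]_n)
    (s : {set 'I_m}) : Prop :=
  forall c : 'I_m -> R,
    \sum_(j in s) c j *: v j = 0 -> forall j, j \in s -> c j = 0.

(* The cones {cone(v_s) : s in K} form a complete simplicial fan in R^n
   whose rays are generated by the v j, i.e. K is (up to relabelling the
   vertices) the underlying complex of that fan. *)
Definition complete_simplicial_fan (R : realType) (n m : nat)
    (K : {set {set 'I_m}}) (v : 'I_m -> 'rV[R]_n) : Prop :=
  [/\ forall j, v j != 0,
      forall s, s \in K -> lin_indep_on v s,
      forall s t, s \in K -> t \in K ->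
        forall x, (in_cone v s x /\ in_cone v t x) <-> in_cone v (s :&: t) x
    & forall x, exists2 s, s \in K & in_cone v s x].

(* Starshaped (n-1)-sphere on vertex set [m] (no ghost vertices). *)
Definition starshaped_sphere (R : realType) (n m : nat) (K : {set {set 'I_m}}) : Prop :=
  [/\ simplicial_complex K,
      forall j : 'I_m, [set j] \in K
    & exists v : 'I_m -> 'rV[R]_n, complete_simplicial_fan K v].

(* Characteristic matrix: for every face s, the columns lambda_j (j in s)
   are part of a basis of Z^n, i.e. they occur (distinctly) among the
   columns of an invertible integer n x n matrix. *)
Definition characteristic_matrix (n m : nat) (K : {set {set 'I_m}})
    (L : 'M[int]_(n, m)) : Prop :=
  forall s, s \in K ->
    exists B : 'M[int]_n, B \in unitmx /\
    exists g : 'I_m -> 'I_n, {in s &, injective g} /\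
      forall j, j \in s -> col (g j) B = col j L.

Definition char_form (n m : nat) (L : 'M[int]_(n, m)) (i : 'I_n) : {mpoly int[m]} :=
  \sum_(j < m) (L i j)%:MP * 'X_j.

Definition in_char_ideal (n m : nat) (L : 'M[int]_(n, m)) (p : {mpoly int[m]}) : Prop :=
  exists g : 'I_n -> {mpoly int[m]}, p = \sum_(i < n) g i * char_form L i.

Definition full_subcomplex (m : nat) (K : {set {set 'I_m}}) (V : {set 'I_m}) :=
  [set s in K | s \subset V].

(* K is a suspension: K = K_{a,b} * L with {a,b} not a face, L a simplicial
   complex on the remaining vertices. *)
Definition suspension (m : nat) (K : {set {set 'I_m}}) : Prop :=
  exists a b : 'I_m, a != b /\ [set a; b] \notin K /\
    exists L : {set {set 'I_m}}, simplicial_complex L /\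
      (forall t, t \in L -> [disjoint t & [set a; b]]) /\
      K = [set s :|: t | s in full_subcomplex K [set a; b], t in L].

From HB Require Import structures.
From mathcomp Require Import all_boot all_order all_algebra.
From mathcomp Require Import reals.
From mathcomp Require Import mpoly.
From Stdlib Require Import Classical.
From mathcomp Require Import lra.
Import Order.TTheory GRing.Theory Num.Theory.
Local Open Scope ring_scope.

(* Write q = a_i x_i + a_j x_j for the given nonzero element of J.
   - Algebra.  If s is a face with at least n vertices, the columns lambda_k
     (k in s) contain a basis of Z^n; hence for any vertex x outside s the
     forms of J have a common integer zero equal to 1 at x and 0 outside
     s :|: [set x].  Evaluating q there shows: every face with >= n vertices
     contains i or j (facets_meet_pair).
   - Geometry.  For a complete simplicial fan, pushing the point sum_(tau) v
     slightly in a direction w lands in the cone of a face containing tau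
     (fan_perturb; a pigeonhole and closedness argument).  Consequently K is
     pure (every face lies in one with >= n vertices) and has the wall
     crossing property of a pseudomanifold (fan_wall_crossing).
   - Combinatorics.  A flag, pure complex with wall crossing all of whose
     facets meet {i, j} is the suspension of the complex of faces avoiding
     i and j (suspension_criterion). *)

Lemma face_sub (m : nat) (K : {set {set 'I_m}}) (s t : {set 'I_m}) :
  simplicial_complex K -> s \in K -> t \subset s -> t \in K.
Proof. by case=> _; apply. Qed.
Arguments face_sub {m K s t}.

Lemma pair_face (m : nat) (K : {set {set 'I_m}}) (X : {set 'I_m}) (a b : 'I_m) :
  simplicial_complex K -> X \in K -> a \in X -> b \in X -> [set a; b] \in K.
Proof.
move=> K_complex XK aX bX; apply: (face_sub K_complex XK).
by apply/subsetP => k; rewrite !inE => /orP[/eqP -> | /eqP ->].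
Qed.
Arguments pair_face {m K X a b}.

(* In a flag complex, a vertex set all of whose pairs are faces is a face:
   a minimal non-face inside it is a missing face, hence one of these pairs. *)
Lemma flag_clique (m : nat) (K : {set {set 'I_m}}) (s : {set 'I_m}) :
  flag K -> (forall a b, a \in s -> b \in s -> [set a; b] \in K) -> s \in K.
Proof.
move=> K_flag pairs_s; apply: contraT => sK.
pose S := [set t : {set 'I_m} | (t \subset s) && (t \notin K)].
have sS : s \in S by rewrite inE subxx sK.
case: (@arg_minnP _ s (fun t => t \in S) (fun t => #|t|) sS) => t.
rewrite inE => /andP[ts tK] t_min.
have t_missing : missing_face K t.
  split=> // u ut; apply: contraT => uK.
  have := t_min u; rewrite inE (subset_trans (proper_sub ut) ts) uK => /(_ isT).
  by rewrite leqNgt proper_card.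
have /cards2P [a [b [_ t_ab]]] : #|t| == 2%N by rewrite K_flag.
have [a_s b_s] : a \in s /\ b \in s.
  by split; apply: (subsetP ts); rewrite t_ab !inE eqxx ?orbT.
by move: tK; rewrite t_ab pairs_s.
Qed.
Arguments flag_clique {m K s}.

Lemma facet_columns_span (n m : nat) (K : {set {set 'I_m}}) (L : 'M[int]_(n, m))
    (s : {set 'I_m}) (x : 'cV[int]_n) :
  characteristic_matrix K L -> s \in K -> (n <= #|s|)%N ->
  exists c : 'I_m -> int, forall r, x r 0 = \sum_(k in s) L r k * c k.
Proof.
move=> L_char sK n_s; have [B [B_unit [g [g_inj col_g]]]] := L_char s sK.
have g_onto : g @: s = setT.
  by apply/eqP; rewrite eqEcard subsetT cardsT card_ord card_in_imset.
pose y := invmx B *m x.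
exists (fun k => y (g k) 0) => r.
have B_g k : k \in s -> B r (g k) = L r k.
  by move=> ks; have := congr1 (fun M : 'cV[int]_n => M r 0) (col_g k ks); rewrite !mxE.
rewrite -[x](mulKVmx B_unit) mxE.
transitivity (\sum_(q in g @: s) B r q * y q 0).
  by rewrite g_onto; apply: eq_bigl => q; rewrite inE.
rewrite big_imset //=; apply: eq_bigr => k ks; by rewrite B_g.
Qed.
Arguments facet_columns_span {n m K L s} x.

Lemma meval_char_form (n m : nat) (L : 'M[int]_(n, m)) (p : 'I_m -> int) (r : 'I_n) :
  meval p (char_form L r) = \sum_(k < m) L r k * p k.
Proof.
rewrite /char_form raddf_sum /=; apply: eq_bigr => k _.
by rewrite mevalM mevalC mevalXU.
Qed.

(* If a face s has >= n vertices and i is not in s, the linear forms of J have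
   a common integer zero p with p i = 1 vanishing outside s :|: [set i]:
   write lambda_i as a combination of the lambda_k, k in s. *)
Lemma char_forms_common_zero (n m : nat) (K : {set {set 'I_m}})
    (L : 'M[int]_(n, m)) (s : {set 'I_m}) (i : 'I_m) :
  characteristic_matrix K L -> s \in K -> (n <= #|s|)%N -> i \notin s ->
  exists p : 'I_m -> int, [/\ p i = 1,
    forall k, k != i -> k \notin s -> p k = 0 &
    forall r, meval p (char_form L r) = 0].
Proof.
move=> L_char sK n_s i_s.
have [c col_i] := facet_columns_span (col i L) L_char sK n_s.
pose p k := if k == i then 1 else if k \in s then - c k else 0.
exists p; split=> [|k /negPf ki /negPf ks|r]; rewrite /p ?eqxx ?ki ?ks //.
rewrite meval_char_form (bigD1 i) //= eqxx mulr1.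
rewrite (bigID (fun k => k \in s)) /= [X in _ + (_ + X)]big1; last first.
  by move=> k /andP[/negPf -> /negPf ->]; rewrite mulr0.
have := col_i r; rewrite mxE => ->; rewrite addr0 -[RHS](subrr (\sum_(k in s) L r k * c k)).
congr (_ + _); rewrite -sumrN; apply: eq_big => [k | k /andP[/negPf -> ->]].
  by apply/andP/idP => [[] // | ks]; split=> //; apply: contraTneq ks => ->.
by rewrite mulrN.
Qed.
Arguments char_forms_common_zero {n m K L s i}.

Lemma char_ideal_vanishes (n m : nat) (L : 'M[int]_(n, m)) (p : 'I_m -> int)
    (q : {mpoly int[m]}) :
  (forall r, meval p (char_form L r) = 0) -> in_char_ideal L q -> meval p q = 0.
Proof.
move=> p_zero [G ->]; rewrite raddf_sum /= big1 // => r _.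
by rewrite mevalM p_zero mulr0.
Qed.
Arguments char_ideal_vanishes {n m L p q}.

(* If J contains a nonzero form a_i x_i + a_j x_j, then every face with at
   least n vertices contains i or j: otherwise the common zero of J given by
   such a face and i (resp. j) forces a_i = 0 (resp. a_j = 0). *)
Lemma facets_meet_pair (n m : nat) (K : {set {set 'I_m}}) (L : 'M[int]_(n, m))
    (i j : 'I_m) (ai aj : int) (s : {set 'I_m}) :
  characteristic_matrix K L -> i != j ->
  ai%:MP * 'X_i + aj%:MP * 'X_j != 0 :> {mpoly int[m]} ->
  in_char_ideal L (ai%:MP * 'X_i + aj%:MP * 'X_j) ->
  s \in K -> (n <= #|s|)%N -> (i \in s) || (j \in s).
Proof.
move=> L_char neq_ij q_nz q_J sK n_s; apply: contraT; rewrite negb_or => /andP[i_s j_s].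
have coef_zero x y (ax ay : int) : y != x -> x \notin s -> y \notin s ->
    in_char_ideal L (ax%:MP * 'X_x + ay%:MP * 'X_y) -> ax = 0.
  move=> yx x_s y_s qxy_J.
  have [p [px1 p_out p_zero]] := char_forms_common_zero L_char sK n_s x_s.
  have := char_ideal_vanishes p_zero qxy_J.
  by rewrite mevalD !mevalM !mevalC !mevalXU px1 (p_out y yx y_s) mulr1 mulr0 addr0.
have ai0 : ai = 0 by apply: (coef_zero i j ai aj); rewrite // eq_sym.
have aj0 : aj = 0 by apply: (coef_zero j i aj ai); rewrite // addrC.
by move: q_nz; rewrite ai0 aj0 mpolyC0 !mul0r addr0 eqxx.
Qed.
Arguments facets_meet_pair {n m K L i j ai aj s}.

Lemma lin_indep_coef_uniq (R : realType) (n m : nat) (v : 'I_m -> 'rV[R]_n)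
    (s : {set 'I_m}) (a b : 'I_m -> R) :
  lin_indep_on v s -> \sum_(k in s) a k *: v k = \sum_(k in s) b k *: v k ->
  forall k, k \in s -> a k = b k.
Proof.
move=> s_indep ab k ks; apply/eqP; rewrite -subr_eq0; apply/eqP.
apply: (s_indep (fun k => a k - b k)) => //.
by under eq_bigr do rewrite scalerBl; rewrite sumrB ab subrr.
Qed.
Arguments lin_indep_coef_uniq {R n m v s} a b.

Lemma sum_extend_by_zero (R : ringType) (V : lmodType R) (m : nat)
    (v : 'I_m -> V) (r s : {set 'I_m}) (c : 'I_m -> R) :
  r \subset s ->
  \sum_(k in r) c k *: v k = \sum_(k in s) (if k \in r then c k else 0) *: v k.
Proof.
move=> rs; rewrite [RHS](big_setID r) /= (setIidPr rs) [X in _ + X]big1 ?addr0.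
  by apply: eq_bigr => k ->.
by move=> k; rewrite inE => /andP[/negPf -> _]; rewrite scale0r.
Qed.
Arguments sum_extend_by_zero {R V m} v {r s} c.

Lemma pigeonhole_frequently (T : eqType) (S : seq T) (P : nat -> T -> Prop) :
  (forall N, exists2 x, x \in S & P N x) ->
  exists2 x, x \in S & forall M, exists N, (M <= N)%N /\ P N x.
Proof.
elim: S P => [|x S IH] P P_hit; first by case: (P_hit 0%N).
case: (classic (forall M, exists N, (M <= N)%N /\ P N x)) => [x_freq | x_rare].
  by exists x; rewrite ?mem_head.
have [M0 x_late] : exists M0, forall N, (M0 <= N)%N -> ~ P N x.
  apply: NNPP => no_M0; apply: x_rare => M; apply: NNPP => no_N; apply: no_M0.
  by exists M => N MN PNx; apply: no_N; exists N.
have S_hit N : exists2 y, y \in S & P (N + M0)%N y.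
  have [y] := P_hit (N + M0)%N; rewrite in_cons => /orP[/eqP -> | yS] Py.
    by case: (x_late (N + M0)%N); rewrite ?leq_addl.
  by exists y.
have [y yS y_freq] := IH (fun N y => P (N + M0)%N y) S_hit.
exists y; first by rewrite in_cons yS orbT.
move=> M; have [N [MN PNy]] := y_freq M; exists (N + M0)%N; split=> //.
by rewrite (leq_trans MN) ?leq_addr.
Qed.
Arguments pigeonhole_frequently {T S P}.

Lemma ge0_of_frequently (R : archiFieldType) (a b : R) :
  (forall M : nat, exists N, (M <= N)%N /\ 0 <= a + (N.+1%:R)^-1 * b) -> 0 <= a.
Proof.
move=> freq; rewrite leNgt; apply/negP => a_neg.
have [N [bound_N hN]] := freq (Num.bound (`|b| / - a)).
have k_pos : 0 < N.+1%:R :> R by rewrite ltr0n.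
have lower : 0 <= a * N.+1%:R + b.
  have := mulr_ge0 hN (ltW k_pos).
  by rewrite mulrDl mulrAC mulVf ?gt_eqF // mul1r.
have upper : `|b| < N.+1%:R * - a.
  rewrite -ltr_pdivrMr ?oppr_gt0 //.
  apply: (lt_le_trans (archi_boundP _)); first by rewrite divr_ge0 // oppr_ge0 ltW.
  by rewrite ler_nat (leq_trans bound_N).
have := ler_norm b; lra.
Qed.

Lemma span_of_two_points (R : fieldType) (V : lmodType R) (m : nat)
    (v : 'I_m -> V) (s : {set 'I_m}) (z w : V) (t1 t2 : R) (a b : 'I_m -> R) :
  t1 != t2 ->
  z + t1 *: w = \sum_(k in s) a k *: v k -> z + t2 *: w = \sum_(k in s) b k *: v k ->
  exists alpha beta : 'I_m -> R,
    z = \sum_(k in s) alpha k *: v k /\ w = \sum_(k in s) beta k *: v k.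
Proof.
move=> t12 za zb; rewrite -subr_eq0 in t12.
pose beta k := (a k - b k) / (t1 - t2).
have w_beta : w = \sum_(k in s) beta k *: v k.
  under eq_bigr => k _ do rewrite /beta mulrC -scalerA scalerBl.
  rewrite -scaler_sumr sumrB -za -zb opprD addrACA subrr add0r -scalerBl.
  by rewrite scalerA mulVf // scale1r.
exists (fun k => a k - t1 * beta k), beta; split=> //.
under eq_bigr => k _ do rewrite scalerBl -scalerA.
by rewrite sumrB -scaler_sumr -w_beta -za addrK.
Qed.
Arguments span_of_two_points {R V m v s z w t1 t2 a b}.

Lemma cone_closed_along_ray (R : realType) (n m : nat) (v : 'I_m -> 'rV[R]_n)
    (rho : {set 'I_m}) (z w : 'rV[R]_n) :
  lin_indep_on v rho ->
  (forall M, exists N, (M <= N)%N /\ in_cone v rho (z + (N.+1%:R)^-1 *: w)) ->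
  in_cone v rho z.
Proof.
move=> rho_indep freq.
have [N1 [_ [a [_ za]]]] := freq 0%N.
have [N2 [N12 [b [_ zb]]]] := freq N1.+1.
have t12 : (N1.+1%:R)^-1 != (N2.+1%:R)^-1 :> R.
  by rewrite (inj_eq invr_inj) eqr_nat eqSS neq_ltn N12.
have [alpha [beta [z_alpha w_beta]]] := span_of_two_points t12 za zb.
exists alpha; split=> // k k_rho.
apply: (@ge0_of_frequently _ _ (beta k)) => M.
have [N [MN [c [c_ge0 zc]]]] := freq M; exists N; split=> //.
have c_k : c k = alpha k + (N.+1%:R)^-1 * beta k.
  apply: (lin_indep_coef_uniq c (fun j => alpha j + (N.+1%:R)^-1 * beta j) rho_indep) => //.
  rewrite -zc z_alpha w_beta scaler_sumr -big_split; apply: eq_bigr => j _.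
  by rewrite scalerA scalerDl.
by rewrite -c_k c_ge0.
Qed.

Lemma small_family_not_spanning (R : fieldType) (n m : nat) (v : 'I_m -> 'rV[R]_n)
    (s : {set 'I_m}) :
  (#|s| < n)%N -> exists w : 'rV[R]_n, forall c : 'I_m -> R, w != \sum_(k in s) c k *: v k.
Proof.
move=> s_small; apply: NNPP => spanning.
have span_all (w : 'rV[R]_n) : exists c : 'I_m -> R, w = \sum_(k in s) c k *: v k.
  apply: NNPP => w_out; apply: spanning; exists w => c; apply/eqP => e.
  by apply: w_out; exists c.
pose M := \matrix_(a < #|s|) v (enum_val a).
have v_in_M k : k \in s -> (v k <= M)%MS.
  by move=> ks; have := row_sub (enum_rank_in ks k) M; rewrite rowK enum_rankK_in.
have : ((1%:M : 'M[R]_n) <= M)%MS.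
  apply/row_subP => r; have [c ->] := span_all (row r 1%:M).
  by apply: summx_sub => k ks; apply: scalemx_sub (v_in_M k ks).
move/mxrankS; rewrite mxrank1 => /leq_trans/(_ (rank_leq_row M)).
by rewrite leqNgt s_small.
Qed.
Arguments small_family_not_spanning {R n m} v {s}.

(* In an independent family sigma, the vector sum_(tau) v - t v_x, with tau
   and x in sigma, x not in tau and t > 0, has a negative coefficient at x,
   so it lies in no cone spanned by a subfamily of sigma. *)
Lemma cone_excludes_negative_coef (R : realType) (n m : nat) (v : 'I_m -> 'rV[R]_n)
    (sigma rho tau : {set 'I_m}) (x : 'I_m) (t : R) :
  lin_indep_on v sigma -> rho \subset sigma -> tau \subset sigma ->
  x \in sigma -> x \notin tau -> 0 < t ->
  ~ in_cone v rho (\sum_(k in tau) v k - t *: v x).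
Proof.
move=> sigma_indep rho_sigma tau_sigma x_sigma x_tau t_pos [c [c_ge0 cone_c]].
pose d k := (if k \in tau then 1 else 0) - (if k \in [set x] then t else 0).
have c_x : (if x \in rho then c x else 0) = d x.
  apply: (lin_indep_coef_uniq (fun k => if k \in rho then c k else 0) d sigma_indep) => //.
  have tau_part : \sum_(k in tau) v k =
      \sum_(k in sigma) (if k \in tau then 1 else 0) *: v k.
    by rewrite -(sum_extend_by_zero v (fun=> 1)) //; apply: eq_bigr => k _; rewrite scale1r.
  have x_part : t *: v x = \sum_(k in sigma) (if k \in [set x] then t else 0) *: v k.
    by rewrite -(sum_extend_by_zero v (fun=> t)) ?sub1set // big_set1.
  rewrite -sum_extend_by_zero // -cone_c tau_part x_part -sumrB.
  by apply: eq_bigr => k _; rewrite scalerBl.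
move: c_x; rewrite /d (negPf x_tau) set11 sub0r.
case: ifP => [/c_ge0 c_x_ge0 c_x | _ /eqP]; last by rewrite eq_sym oppr_eq0 gt_eqF.
by move: c_x_ge0; rewrite c_x oppr_ge0 leNgt t_pos.
Qed.
Arguments cone_excludes_negative_coef {R n m v sigma rho tau x t}.

Section CompleteFan.

Variables (R : realType) (n m : nat) (K : {set {set 'I_m}}) (v : 'I_m -> 'rV[R]_n).
Hypothesis fan : complete_simplicial_fan K v.

Lemma fan_face_indep {s} : s \in K -> lin_indep_on v s.
Proof. by case: fan => _ indep _ _; apply: indep. Qed.

(* If the barycentre-like vector sum_(tau) v lies in the cone of a face rho,
   then tau is a subface of rho: the cones of tau and rho meet in the cone of
   rho :&: tau, and coefficients over tau are unique. *)
Lemma face_sum_in_cone_sub tau rho : tau \in K -> rho \in K ->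
  in_cone v rho (\sum_(k in tau) v k) -> tau \subset rho.
Proof.
move=> tauK rhoK sum_rho; have [_ _ cones_meet _] := fan.
have sum_tau : in_cone v tau (\sum_(k in tau) v k).
  by exists (fun=> 1); split=> [*|]; [apply: ler01 | apply: eq_bigr => k _; rewrite scale1r].
have [c [_ sum_c]] := (cones_meet rho tau rhoK tauK _).1 (conj sum_rho sum_tau).
apply/subsetP => k k_tau; apply: contraT => k_rho.
have := lin_indep_coef_uniq (fun=> 1) (fun k => if k \in rho :&: tau then c k else 0)
  (fan_face_indep tauK) _ k k_tau.
rewrite inE (negPf k_rho) /= => /(_ _)/eqP; rewrite oner_eq0; apply.
rewrite -sum_extend_by_zero ?subsetIr // -sum_c.
by under eq_bigr do rewrite scale1r.
Qed.

Lemma fan_perturb {tau} (w : 'rV[R]_n) : tau \in K ->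
  exists2 rho, rho \in K &
    tau \subset rho /\ exists2 t : R, 0 < t & in_cone v rho (\sum_(k in tau) v k + t *: w).
Proof.
move=> tauK; have [_ _ _ cover] := fan.
have hit N : exists2 r, r \in enum K &
    in_cone v r (\sum_(k in tau) v k + (N.+1%:R)^-1 *: w).
  by have [r rK r_cone] := cover (\sum_(k in tau) v k + (N.+1%:R)^-1 *: w);
    exists r; rewrite ?mem_enum.
have [rho] := pigeonhole_frequently hit; rewrite mem_enum => rhoK freq.
exists rho => //; split.
  by apply: face_sum_in_cone_sub => //; apply: cone_closed_along_ray (fan_face_indep rhoK) freq.
have [N [_ cone_N]] := freq 0%N; exists (N.+1%:R)^-1 => //.
by rewrite invr_gt0 ltr0n.
Qed.

(* Purity: every face lies in a face with at least n vertices; a maximal face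
   with fewer vertices could be left in a direction outside its span. *)
Lemma fan_pure s : s \in K -> exists2 sg, sg \in K & (s \subset sg) && (n <= #|sg|)%N.
Proof.
move=> sK; pose S := [set sg in K | s \subset sg].
have sS : s \in S by rewrite inE sK subxx.
case: (@arg_maxnP _ s (fun sg => sg \in S) (fun sg => #|sg|) sS) => sg.
rewrite inE => /andP[sgK s_sg] sg_max.
exists sg => //; rewrite s_sg /= leqNgt; apply/negP => sg_small.
have [w w_out] := small_family_not_spanning v sg_small.
have [rho rhoK [sg_rho [t t_pos [c [_ cone_c]]]]] := fan_perturb w sgK.
have [rho_sg | rho_neq] := eqVneq rho sg.
  move: cone_c; rewrite rho_sg => cone_c.
  move/eqP: (w_out (fun k => t^-1 * (c k - 1))); apply.
  under eq_bigr => k _ do rewrite -scalerA scalerBl scale1r.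
  rewrite -scaler_sumr sumrB -cone_c addrC addKr scalerA mulVf ?gt_eqF //.
  by rewrite scale1r.
have sg_proper : sg \proper rho by rewrite properEneq eq_sym rho_neq sg_rho.
have := sg_max rho; rewrite inE rhoK (subset_trans s_sg sg_rho) => /(_ isT).
by move/(leq_trans (proper_card sg_proper)); rewrite ltnn.
Qed.

(* Wall crossing: if tau and x |: tau are faces, pushing sum_(tau) v away from
   v_x lands in a face rho containing tau but neither x nor only tau; any
   y in rho \ tau gives a second face y |: tau. *)
Lemma fan_wall_crossing tau x : simplicial_complex K ->
  tau \in K -> x \notin tau -> x |: tau \in K ->
  exists2 y, (y \notin tau) && (y != x) & y |: tau \in K.
Proof.
move=> K_complex tauK x_tau xtauK.
have [rho rhoK [tau_rho [t t_pos cone_t]]] := fan_perturb (- v x) tauK.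
rewrite scalerN in cone_t.
have x_rho : x \notin rho.
  apply/negP => x_rho; apply: (cone_excludes_negative_coef (fan_face_indep rhoK)
    (subxx rho) tau_rho x_rho x_tau t_pos cone_t).
have rho_tau : rho != tau.
  apply/eqP => rho_tau; rewrite rho_tau in cone_t.
  apply: (cone_excludes_negative_coef (fan_face_indep xtauK) (subsetUr _ _)
    (subsetUr _ _) (setU11 _ _) x_tau t_pos cone_t).
have /properP[_ [y y_rho y_tau]] : tau \proper rho by rewrite properEneq eq_sym rho_tau.
exists y; first by rewrite y_tau; apply: contraNneq x_rho => <-.
apply: (face_sub K_complex rhoK); apply/subsetP => k.
by rewrite in_setU1 => /orP[/eqP -> // | /(subsetP tau_rho)].
Qed.

End CompleteFan.
Arguments fan_pure {R n m K v} fan s.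
Arguments fan_wall_crossing {R n m K v} fan {tau x}.

Section SuspensionCriterion.

Variables (m d : nat) (K : {set {set 'I_m}}) (i j : 'I_m).
Hypothesis K_complex : simplicial_complex K.
Hypothesis K_flag : flag K.
Hypothesis neq_ij : i != j.
Hypothesis K_pure :
  forall s, s \in K -> exists2 sg, sg \in K & (s \subset sg) && (d <= #|sg|)%N.
Hypothesis K_walls : forall tau x, tau \in K -> x \notin tau -> x |: tau \in K ->
  exists2 y, (y \notin tau) && (y != x) & y |: tau \in K.
Hypothesis facets_meet_ij :
  forall s, s \in K -> (d <= #|s|)%N -> (i \in s) || (j \in s).

(* Faces avoiding both i and j; they will form the link L. *)
Definition avoids_ij (t : {set 'I_m}) := (i \notin t) && (j \notin t).

Definition maximal_avoiding (t : {set 'I_m}) :=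
  [/\ t \in K, avoids_ij t &
      forall y, y \notin t -> y != i -> y != j -> y |: t \notin K].

Lemma maximal_avoiding_exists {tau} : tau \in K -> avoids_ij tau ->
  exists2 t, maximal_avoiding t & tau \subset t.
Proof.
move=> tauK tau_av.
pose S := [set t in K | (tau \subset t) && avoids_ij t].
have tauS : tau \in S by rewrite inE tauK subxx tau_av.
case: (@arg_maxnP _ tau (fun t => t \in S) (fun t => #|t|) tauS) => t.
rewrite inE => /and3P[tK taut t_av] t_max.
exists t => //; split=> // y yt yi yj; apply/negP => ytK.
have := t_max (y |: t); rewrite inE ytK (subset_trans taut (subsetUr _ _)) /=.
have -> : avoids_ij (y |: t).
  by move: t_av; rewrite /avoids_ij !in_setU1 !(eq_sym _ y) (negPf yi) (negPf yj).
by move=> /(_ isT); rewrite cardsU1 yt ltnn.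
Qed.

Lemma maximal_avoiding_swap {t} x y : maximal_avoiding t ->
  ((x == i) && (y == j)) || ((x == j) && (y == i)) ->
  x |: t \in K -> y |: t \in K.
Proof.
move=> [tK /andP[it jt] t_max] xy xtK.
have xt : x \notin t by case/orP: xy => /andP[/eqP -> _].
have [z /andP[zt zx] ztK] := K_walls _ _ tK xt xtK.
case: (eqVneq z y) => [<- // | zy].
by move: ztK; apply/contraTT => _; apply: t_max => //;
  case/orP: xy => /andP[/eqP ex /eqP ey]; rewrite -?ex -?ey.
Qed.

(* A maximal avoiding face is contained in a face with >= d vertices, which
   must contain i or j; wall crossing then gives both cones. *)
Lemma maximal_avoiding_cones {t} : maximal_avoiding t ->
  (i |: t \in K) /\ (j |: t \in K).
Proof.
move=> t_max; have [tK _ _] := t_max.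
have [sg sgK /andP[tsg dsg]] := K_pure _ tK.
have cone_in x : x \in sg -> x |: t \in K.
  move=> xsg; apply: (face_sub K_complex sgK); apply/subsetP => k.
  by rewrite in_setU1 => /orP[/eqP -> // | /(subsetP tsg)].
case/orP: (facets_meet_ij _ sgK dsg) => [/cone_in iK | /cone_in jK].
  by split=> //; apply: (maximal_avoiding_swap i j t_max _ iK); rewrite !eqxx.
by split=> //; apply: (maximal_avoiding_swap j i t_max _ jK); rewrite !eqxx orbT.
Qed.

Lemma avoiding_cones {t} : t \in K -> avoids_ij t ->
  (i |: t \in K) /\ (j |: t \in K).
Proof.
move=> tK t_av; have [tp tp_max ttp] := maximal_avoiding_exists tK t_av.
have [iK jK] := maximal_avoiding_cones tp_max.
by split; [apply: (face_sub K_complex iK) | apply: (face_sub K_complex jK)]; apply: setUS.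
Qed.

(* {i, j} is a missing edge: otherwise, by flagness, a maximal avoiding face t
   would span the face {i, j} :|: t, and crossing its wall opposite to j
   would enlarge t. *)
Lemma pair_nonface : [set i; j] \notin K.
Proof.
apply/negP => ijK.
have [t t_max _] : exists2 t, maximal_avoiding t & set0 \subset t.
  by apply: maximal_avoiding_exists; rewrite ?K_complex.1 // /avoids_ij !inE.
have [iK jK] := maximal_avoiding_cones t_max.
have [tK /andP[it jt] t_ext] := t_max.
have ijtK : j |: (i |: t) \in K.
  apply: (flag_clique K_flag) => a b aZ bZ.
  have out_X k : k \in j |: (i |: t) -> k \notin i |: t -> k = j.
    by rewrite in_setU1 => /orP[/eqP -> | ->].
  have out_Y k : k \in j |: (i |: t) -> k \notin j |: t -> k = i.
    by rewrite !in_setU1 => /or3P[/eqP -> | /eqP -> | ->]; rewrite ?eqxx ?orbT.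
  have [aX | /(out_X _ aZ) ->] := boolP (a \in i |: t);
    have [bX | /(out_X _ bZ) ->] := boolP (b \in i |: t).
  - exact: (pair_face K_complex) iK aX bX.
  - have [aY | /(out_Y _ aZ) -> //] := boolP (a \in j |: t).
    exact: (pair_face K_complex) jK aY (setU11 _ _).
  - have [bY | /(out_Y _ bZ) ->] := boolP (b \in j |: t); last by rewrite setUC.
    exact: (pair_face K_complex) jK (setU11 _ _) bY.
  - exact: (pair_face K_complex) jK (setU11 _ _) (setU11 _ _).
have jit : j \notin i |: t by rewrite in_setU1 negb_or eq_sym neq_ij.
have [y /andP[yit yj] yitK] := K_walls _ _ iK jit ijtK.
move: yit; rewrite in_setU1 negb_or => /andP[yi yt].
move: (t_ext y yt yi yj); apply/negP/negPn; apply: (face_sub K_complex yitK).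
by apply: setUS; apply: subsetUr.
Qed.

Lemma face_in_pair {s} : s \in K -> s \subset [set i; j] ->
  (s \subset [set i]) || (s \subset [set j]).
Proof.
move=> sK sij; apply: contraT; rewrite negb_or.
case/andP=> /subsetPn[a a_s ai] /subsetPn[b b_s bj].
have a_j : a = j by move: (subsetP sij a a_s) ai; rewrite !inE => /orP[-> | /eqP].
have b_i : b = i by move: (subsetP sij b b_s) bj; rewrite !inE => /orP[/eqP | ->].
by move: pair_nonface; rewrite -a_j -b_i (pair_face K_complex sK b_s a_s).
Qed.

Theorem suspension_criterion : suspension K.
Proof.
exists i, j; split=> //; split; first exact: pair_nonface.
exists [set t in K | avoids_ij t]; split; [split | split].
- by rewrite inE K_complex.1 /avoids_ij !inE.
- move=> s t; rewrite !inE => /andP[sK /andP[i_s j_s]] ts; rewrite (face_sub K_complex sK ts) /=.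
  by apply/andP; split; [apply: contra i_s | apply: contra j_s]; apply: (subsetP ts).
- move=> t; rewrite inE => /andP[_ /andP[it jt]].
  by apply/pred0P => k /=; rewrite !inE; apply/andP => -[kt /orP[] /eqP ek];
    move: kt; rewrite ek ?(negPf it) ?(negPf jt).
apply/setP => s; apply/idP/imset2P => [sK | [s1 t]].
  exists (s :&: [set i; j]) (s :\: [set i; j]); last by rewrite setID.
    by rewrite inE (face_sub K_complex sK (subsetIl _ _)) subsetIr.
  by rewrite inE (face_sub K_complex sK (subsetDl _ _)) /avoids_ij !inE !eqxx ?orbT.
rewrite !inE => /andP[s1K s1ij] /andP[tK t_av] ->.
have [iK jK] := avoiding_cones tK t_av.
by case/orP: (face_in_pair s1K s1ij) => s1x;
  [apply: (face_sub K_complex iK) | apply: (face_sub K_complex jK)]; apply: setSU.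
Qed.

End SuspensionCriterion.
Arguments suspension_criterion {m d K i j}.

Theorem mainTheorem14 (R : realType) (n m : nat) (K : {set {set 'I_m}})
    (L : 'M[int]_(n, m)) :
  flag K -> starshaped_sphere R n K -> characteristic_matrix K L ->
  (exists (i j : 'I_m) (ai aj : int), i != j /\
      ai%:MP * 'X_i + aj%:MP * 'X_j != 0 :> {mpoly int[m]} /\
      in_char_ideal L (ai%:MP * 'X_i + aj%:MP * 'X_j)) ->
  suspension K.
Proof.
move=> K_flag [K_complex _ [v fan]] L_char [i [j [ai [aj [neq_ij [q_nz q_J]]]]]].
apply: (suspension_criterion K_complex K_flag neq_ij (fan_pure fan)).
- move=> tau x; exact: (fan_wall_crossing fan K_complex).
- by move=> s; apply: facets_meet_pair L_char neq_ij q_nz q_J.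
Qed.
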